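(* Let $\mathcal{M}$ be a graph matroid family with rank function $r$. (a) $\mathcal{M}$ is unbounded if and only if every forest is $\mathcal{M}$-independent. (b) If $\mathcal{M}$ is bounded, then the graph consisting of $r(\mathcal{M})+1$ pairwise vertex-disjoint edges is an $\mathcal{M}$-circuit.
   Context: All graphs are finite and simple and have no isolated vertices. A graph matroid family $\mathcal{M}$ assigns to every graph $G$ a matroid $\mathcal{M}(G)$ on $E(G)$ such that (i) every graph isomorphism $V(G)\to V(H)$ induces an isomorphism $\mathcal{M}(G)\to\mathcal{M}(H)$, and (ii) for every subgraph $H$ of $G$, $\mathcal{M}(H)$ is the restriction of $\mathcal{M}(G)$ to $E(H)$. $r(G)$ is the rank of $\mathcal{M}(G)$. $G$ is $\mathcal{M}$-independent if $r(G)=|E(G)|$; an $\mathcal{M}$-circuit is a graph $C$ with $r(C)<|E(C)|$ and $r(C-e)=|E(C)|-1$ for all edges $e$. $\mathcal{M}$ is unbounded if $r(K_n)$ is unbounded in $n$, and bounded otherwise; in the bounded case $r(\mathcal{M})=\lim_n r(K_n)$. *)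

From HB Require Import structures.
From mathcomp Require Import all_boot all_order.
From mathcomp Require Import finmap.
Set Implicit Arguments. Unset Strict Implicit. Unset Printing Implicit Defensive.
Local Open Scope fset_scope.

(* A finite simple graph without isolated vertices, with vertices labelled by
   natural numbers, is determined by its edge set: a finite set of
   2-element subsets of nat. *)
Definition edge := {fset nat}.
Definition graph := {fset edge}.

Definition is_graph (G : graph) : Prop := forall e, e \in G -> #|` e| = 2.

Definition is_vertex (G : graph) (v : nat) : Prop := exists2 e, e \in G & v \in e.

Definition eimage (f : nat -> nat) (e : edge) : edge := [fset f x | x in e].
Definition gimage (f : nat -> nat) (G : graph) : graph :=
  [fset eimage f e | e in G].

Definition matroid_on (E : graph) (I : graph -> bool) : Prop :=
  [/\ I fset0,
      (forall A B, A `<=` E -> B `<=` A -> I A -> I B) &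
      (forall A B, A `<=` E -> B `<=` E -> I A -> I B -> #|` A| < #|` B| ->
         exists2 e, e \in B `\` A & I (e |` A))].

Definition graph_matroid_family (indep : graph -> graph -> bool) : Prop :=
  [/\ (forall G, is_graph G -> matroid_on G (indep G)),
      (forall G H (f : nat -> nat), is_graph G -> is_graph H ->
         (forall u v, is_vertex G u -> is_vertex G v -> f u = f v -> u = v) ->
         gimage f G = H ->
         forall F, F `<=` G -> indep G F = indep H (gimage f F)) &
      (forall G H, is_graph G -> is_graph H -> H `<=` G ->
         forall F, F `<=` H -> indep H F = indep G F)].

Definition rank (indep : graph -> graph -> bool) (G : graph) : nat :=
  \max_(F <- fpowerset G | indep G F) #|` F|.

Definition Kn (n : nat) : graph :=
  [fset ([fset i; j] : edge) | i in [fset x | x in iota 0 n],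
     j in [fset x | x in iota 0 n] & i != j].

Definition matching (k : nat) : graph :=
  [fset ([fset i.*2; i.*2.+1] : edge) | i in [fset x | x in iota 0 k]].

Definition unbounded (indep : graph -> graph -> bool) : Prop :=
  forall k, exists n, k <= rank indep (Kn n).

Definition bounded indep : Prop := ~ unbounded indep.

Definition rank_limit indep (rM : nat) : Prop :=
  exists N, forall n, N <= n -> rank indep (Kn n) = rM.

Definition has_cycle (G : graph) : Prop :=
  exists s : seq nat, [/\ 3 <= size s, uniq s & cycle (fun u v => [fset u; v] \in G) s].

Definition forest (G : graph) : Prop := ~ has_cycle G.

Definition M_independent indep (G : graph) : Prop := rank indep G = #|` G|.

Definition M_circuit indep (C : graph) : Prop :=
  rank indep C < #|` C| /\
  forall e, e \in C -> rank indep (C `\ e) = #|` C| - 1.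

From mathcomp Require Import all_boot all_order finmap.
From mathcomp Require Import boolp zify.
Set Implicit Arguments. Unset Strict Implicit. Unset Printing Implicit Defensive.
Local Open Scope fset_scope.
Local Open Scope nat_scope.

(* Everything rests on isomorphism invariance: an edge obtained by
   augmenting an independent F0 from a larger independent set can be renamed,
   by a relabelling fixing F0, into any edge we like with a new endpoint.
   (a) If some star with k edges were dependent (k minimal), all of them would
   be, and a basis T of K_k would span every edge of every K_n: the edge uy is
   spanned by a star of k-1 edges at u, which T already spans.  So r(K_n) <=
   |T|.  Hence in an unbounded family stars are independent, and a forest is
   built leaf by leaf, renaming the edge gained from a large star with fresh
   leaves into the pendant edge.  Conversely the matching with k edges is a
   forest inside K_(2k).
   (b) Matchings with at most r(M) edges are independent by the same renaming,
   now augmenting from a disjoint copy of a basis of a large K_N, while the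
   matching with r(M)+1 edges lies in some K_n of rank r(M). *)

Lemma ex_maxn_prop (P : nat -> Prop) a B : P a -> (forall n, P n -> n <= B) ->
  exists2 m, P m & forall n, P n -> n <= m.
Proof.
move=> Pa hB.
have exP : exists n, `[< P n >] by exists a; apply/asboolP.
have ubP n : `[< P n >] -> n <= B by move/asboolP/hB.
by case: (ex_maxnP exP ubP) => m /asboolP Pm mmax; exists m => // n /asboolP/mmax.
Qed.

Lemma fset2C (a b : nat) : [fset a; b] = [fset b; a].
Proof. exact: fsetUC. Qed.

Lemma card2_fset2 (e : edge) : #|` e| = 2 -> exists a b, a != b /\ e = [fset a; b].
Proof.
move=> e2; have /fset0Pn [a ae] : e != fset0 by rewrite -cardfs_eq0 e2.
have /cardfs1P [b eDa] : #|` e `\ a| == 1 by move: e2; rewrite (cardfsD1 a) ae add1n => -[->].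
exists a, b; split; last by rewrite -(fsetD1K ae) eDa.
by apply/eqP => ab; have := fset11 b; rewrite -eDa -ab in_fsetD1 eqxx.
Qed.

Lemma card2_fset2_at (e : edge) x : #|` e| = 2 -> x \in e ->
  exists2 w, x != w & e = [fset x; w].
Proof.
move=> /card2_fset2 [a [b [ab ->]]] /fset2P [->|->]; first by exists b.
by exists a; rewrite 1?eq_sym // fset2C.
Qed.

Lemma is_graphS G H : H `<=` G -> is_graph G -> is_graph H.
Proof. by move=> /fsubsetP sHG hG e /sHG /hG. Qed.

Lemma is_graphU G H : is_graph G -> is_graph H -> is_graph (G `|` H).
Proof. by move=> hG hH e /fsetUP [/hG|/hH]. Qed.

Lemma is_graphU1 (e : edge) G : #|` e| = 2 -> is_graph G -> is_graph (e |` G).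
Proof. by move=> he hG x /fset1UP [->|/hG]. Qed.

Lemma is_graph0 : is_graph fset0.
Proof. by move=> e; rewrite in_fset0. Qed.

Definition vbound (G : graph) : nat := \max_(e <- G) \max_(x <- e) x.

Lemma leq_vbound G x : is_vertex G x -> x <= vbound G.
Proof.
case=> e he hx; apply: leq_trans (_ : \max_(y <- e) y <= _).
  exact: (leq_bigmax_seq (F := id) x hx isT).
exact: (leq_bigmax_seq (F := fun e : edge => \max_(y <- e) y) e he isT).
Qed.

Lemma eimage_fset2 f a b : eimage f [fset a; b] = [fset f a; f b].
Proof. exact: imfset_fset2. Qed.

Lemma gimageU1 f (e : edge) G : gimage f (e |` G) = eimage f e |` gimage f G.
Proof. exact: imfsetU1. Qed.

Lemma gimage_id_in f G : (forall x, is_vertex G x -> f x = x) -> gimage f G = G.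
Proof.
move=> fG; have fe e : e \in G -> eimage f e = e.
  move=> eG; apply/fsetP => x; apply/imfsetP/idP => [[y ye ->]|xe].
    by rewrite fG //; exists e.
  by exists x; rewrite // fG //; exists e.
apply/fsetP => e; apply/imfsetP/idP => [[e' e'G ->]|eG]; first by rewrite fe.
by exists e; rewrite ?fe.
Qed.

Lemma is_graph_gimage f G : is_graph G ->
  (forall u v, is_vertex G u -> is_vertex G v -> f u = f v -> u = v) ->
  is_graph (gimage f G).
Proof.
move=> hG finj _ /imfsetP [e eG ->].
have [a [b [ab Eab]]] := card2_fset2 (hG _ eG); subst e.
rewrite eimage_fset2 cardfs2; case: eqP => // fab.
have va : is_vertex G a by exists [fset a; b]; rewrite ?fset21.
have vb : is_vertex G b by exists [fset a; b]; rewrite ?fset22.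
by rewrite (finj a b va vb fab) eqxx in ab.
Qed.

Lemma card_gimage f G : injective f -> #|` gimage f G| = #|` G|.
Proof.
move=> finj; rewrite card_imfset //= => e1 e2 e12; apply/fsetP => x.
by rewrite -(mem_imfset imfset_key (mem e1) finj) -(mem_imfset imfset_key (mem e2) finj)
  -/(eimage f e1) e12.
Qed.

Definition swap (a b x : nat) : nat := if x == a then b else if x == b then a else x.

Lemma swapK a b : involutive (swap a b).
Proof.
move=> x; rewrite /swap.
case: (eqVneq x a) => [->|xa]; first by rewrite eqxx; case: eqVneq.
case: (eqVneq x b) => [->|xb]; first by rewrite eqxx.
by rewrite (negbTE xa) (negbTE xb).
Qed.

Lemma swap_inj a b : injective (swap a b).
Proof. exact: inv_inj (swapK a b). Qed.

Lemma swapL a b : swap a b a = b.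
Proof. by rewrite /swap eqxx. Qed.

Lemma swap_id a b x : x != a -> x != b -> swap a b x = x.
Proof. by rewrite /swap => /negbTE -> /negbTE ->. Qed.

Lemma in_iota_fset m n x : (x \in [fset y | y in iota m n]) = (m <= x < m + n).
Proof. by rewrite in_fset /= mem_iota. Qed.

Lemma card_iota_fset m n : #|` [fset y | y in iota m n]| = n.
Proof. by rewrite card_imfset //= undup_id ?iota_uniq ?size_iota. Qed.

Lemma Kn_edge n e : e \in Kn n ->
  exists i j, [/\ i < n, j < n, i != j & e = [fset i; j]].
Proof.
case/imfset2P => i + [j]; rewrite /= inE /= mem_iota => hi.
by rewrite !inE /= mem_iota => /andP [hj ij] ->; exists i, j.
Qed.

Lemma fset2_in_Kn n i j : i < n -> j < n -> i != j -> [fset i; j] \in Kn n.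
Proof.
move=> hi hj ij; apply/imfset2P; exists i; first by rewrite /= in_iota_fset.
by exists j; rewrite //= inE /= ij andbT in_iota_fset.
Qed.

Lemma is_graph_Kn n : is_graph (Kn n).
Proof. by move=> e /Kn_edge [i [j [_ _ ij ->]]]; rewrite cardfs2 ij. Qed.
Arguments is_graph_Kn : clear implicits.

Definition star (u : nat) (L : {fset nat}) : graph := [fset ([fset u; x] : edge) | x in L].

Lemma star_edge u L e : e \in star u L -> exists2 x, x \in L & e = [fset u; x].
Proof. by case/imfsetP => x xL ->; exists x. Qed.

Lemma fset2_in_star u L x : x \in L -> [fset u; x] \in star u L.
Proof. by move=> xL; apply/imfsetP; exists x. Qed.

Lemma starU1 u y L : star u (y |` L) = [fset u; y] |` star u L.
Proof. exact: imfsetU1. Qed.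

Lemma is_graph_star u L : u \notin L -> is_graph (star u L).
Proof.
move=> uL e /star_edge [x xL ->]; rewrite cardfs2; case: eqVneq => // ux.
by rewrite ux xL in uL.
Qed.

Lemma card_star u L : u \notin L -> #|` star u L| = #|` L|.
Proof.
move=> uL; rewrite card_in_imfset //= => x y _ yL exy.
have /fset2P [yu|//] : y \in [fset u; x] by rewrite exy fset22.
by rewrite -yu yL in uL.
Qed.

Lemma star_vertex u L x : is_vertex (star u L) x -> x = u \/ x \in L.
Proof. by case=> e /star_edge [y yL ->] /fset2P [->|->]; [left|right]. Qed.

Lemma gimage_star f u L : gimage f (star u L) = star (f u) (f @` L).
Proof.
apply/fsetP => e; apply/imfsetP/imfsetP => [[_ /star_edge [x xL ->] ->]|[_ /imfsetP [x xL ->] ->]].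
  by exists (f x); [apply/imfsetP; exists x | rewrite eimage_fset2].
by exists [fset u; x]; [apply: fset2_in_star | rewrite eimage_fset2].
Qed.

Definition Mindep (indep : graph -> graph -> bool) (G : graph) : bool := indep G G.

Definition spans indep (T : graph) (g : edge) : Prop :=
  g \in T \/ ~~ Mindep indep (g |` T).

Section GraphMatroidFamily.

Variable indep : graph -> graph -> bool.
Hypothesis Hf : graph_matroid_family indep.

Lemma indep_restr G F : is_graph G -> F `<=` G -> indep G F = Mindep indep F.
Proof.
move=> hG sFG; case: Hf => _ _ hres.
by rewrite /Mindep (hres G F hG (is_graphS sFG hG) sFG F (fsubset_refl _)).
Qed.

Lemma Mindep0 : Mindep indep fset0.
Proof. by case: Hf => /(_ fset0 is_graph0) []. Qed.

Lemma Mindep_sub G H : is_graph G -> H `<=` G -> Mindep indep G -> Mindep indep H.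
Proof.
move=> hG sHG iG; rewrite -(indep_restr hG sHG).
by case: Hf => /(_ G hG) [_ /(_ G H (fsubset_refl _) sHG iG)].
Qed.

Lemma Mindep_aug A B : is_graph A -> is_graph B -> Mindep indep A -> Mindep indep B ->
  #|` A| < #|` B| -> exists2 e, e \in B `\` A & Mindep indep (e |` A).
Proof.
move=> hA hB iA iB ltAB; have hAB := is_graphU hA hB.
have sA := fsubsetUl A B; have sB := fsubsetUr A B.
rewrite -(indep_restr hAB sA) in iA; rewrite -(indep_restr hAB sB) in iB.
case: Hf => /(_ _ hAB) [_ _ /(_ A B sA sB iA iB ltAB) [e eBA ieA]] _ _.
exists e => //; rewrite -(indep_restr hAB) //.
by rewrite fsubUset sA fsub1set; case/fsetDP: eBA => eB _; rewrite in_fsetU eB orbT.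
Qed.

Lemma Mindep_gimage G f : is_graph G ->
  (forall u v, is_vertex G u -> is_vertex G v -> f u = f v -> u = v) ->
  Mindep indep (gimage f G) = Mindep indep G.
Proof.
move=> hG finj; case: Hf => _ hiso _.
by rewrite /Mindep (hiso G _ f hG (is_graph_gimage hG finj) finj erefl G (fsubset_refl _)).
Qed.

Lemma Mindep_U1_relabel F0 S h : is_graph F0 -> is_graph S ->
  Mindep indep F0 -> Mindep indep S -> #|` F0| < #|` S| ->
  (forall g, g \in S -> exists2 f, injective f &
     (forall x, is_vertex F0 x -> f x = x) /\ eimage f g = h) ->
  Mindep indep (h |` F0).
Proof.
move=> hF0 hS iF0 iS ltF0S relabel.
have [g /fsetDP [gS _] igF0] := Mindep_aug hF0 hS iF0 iS ltF0S.
have [f finj [fF0 <-]] := relabel g gS.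
have hgF0 : is_graph (g |` F0) by apply: is_graphU1 => //; apply: hS.
by rewrite -(gimage_id_in fF0) -gimageU1 Mindep_gimage // => u v _ _ /finj.
Qed.

Lemma rank_ge G F : is_graph G -> F `<=` G -> Mindep indep F -> #|` F| <= rank indep G.
Proof.
move=> hG sFG iF; rewrite -(indep_restr hG sFG) in iF.
by apply: (leq_bigmax_seq (F := fun F : graph => #|` F|)) iF; rewrite fpowersetE.
Qed.

Lemma rank_le G m : is_graph G ->
  (forall F, F `<=` G -> Mindep indep F -> #|` F| <= m) -> rank indep G <= m.
Proof.
move=> hG bound; apply/bigmax_leqP_seq => F; rewrite fpowersetE => sFG.
by rewrite indep_restr // => /(bound F sFG).
Qed.

Lemma rank_Mindep G : is_graph G -> Mindep indep G -> rank indep G = #|` G|.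
Proof.
move=> hG iG; apply/eqP; rewrite eqn_leq rank_ge ?fsubset_refl // andbT.
by apply: rank_le => // F sFG _; apply: fsubset_leq_card.
Qed.

Lemma rank_mono H G : is_graph G -> H `<=` G -> rank indep H <= rank indep G.
Proof.
move=> hG sHG; apply: rank_le (is_graphS sHG hG) _ => F sFH iF.
by apply: rank_ge iF => //; apply: fsubset_trans sHG.
Qed.

Lemma ex_max_Mindep X S : S `<=` X -> Mindep indep S ->
  exists2 J, [/\ S `<=` J, J `<=` X & Mindep indep J] &
    forall J', S `<=` J' -> J' `<=` X -> Mindep indep J' -> #|` J'| <= #|` J|.
Proof.
move=> sSX iS.
pose P n := exists J, [/\ S `<=` J, J `<=` X, Mindep indep J & #|` J| = n].
have PS : P #|` S| by exists S; rewrite fsubset_refl.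
have boundP n : P n -> n <= #|` X| by case=> J [_ sJX _ <-]; apply: fsubset_leq_card.
have [_ [J [sSJ sJX iJ <-]] Jmax] := ex_maxn_prop PS boundP.
by exists J => // J' sSJ' sJ'X iJ'; apply: Jmax; exists J'.
Qed.

Lemma rank_basis G : is_graph G ->
  exists2 F, F `<=` G /\ Mindep indep F & #|` F| = rank indep G.
Proof.
move=> hG; have [F [_ sFG iF] Fmax] := ex_max_Mindep (fsub0set G) Mindep0.
exists F => //; apply/eqP; rewrite eqn_leq rank_ge //=.
by apply: rank_le => // F'; apply: Fmax; apply: fsub0set.
Qed.

Lemma spans_max X T g : T `<=` X -> Mindep indep T ->
  (forall J, J `<=` X -> Mindep indep J -> #|` J| <= #|` T|) ->
  g \in X -> spans indep T g.
Proof.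
move=> sTX iT Tmax gX; case: (boolP (g \in T)) => gT; [by left | right].
apply/negP => igT; have := Tmax (g |` T).
by rewrite fsubUset fsub1set gX sTX cardfsU1 gT ltnn => /(_ isT igT).
Qed.

Lemma spans_trans T S (f : edge) : is_graph T -> is_graph S -> #|` f| = 2 ->
  Mindep indep T -> Mindep indep S ->
  (forall g, g \in S -> spans indep T g) -> ~~ Mindep indep (f |` S) -> spans indep T f.
Proof.
move=> hT hS f2 iT iS spanS dfS; case: (boolP (f \in T)) => fT; [by left | right].
apply/negP => ifT.
have [J [sSJ sJTS iJ] Jmax] := ex_max_Mindep (fsubsetUr T S) iS.
have hJ := is_graphS sJTS (is_graphU hT hS).
have leJT : #|` J| <= #|` T|.
  rewrite leqNgt; apply/negP => ltTJ.
  have [g /fsetDP [gJ gNT] igT] := Mindep_aug hT hJ iT iJ ltTJ.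
  have gS : g \in S by move/fsubsetP: sJTS => /(_ g gJ) /fsetUP [] //; rewrite (negbTE gNT).
  by case: (spanS g gS) => [|/negP //]; rewrite (negbTE gNT).
have ltJfT : #|` J| < #|` f |` T| by rewrite cardfsU1 fT.
have [g /fsetDP [/fset1UP [->|gT] gNJ] igJ] :=
  Mindep_aug hJ (is_graphU1 f2 hT) iJ ifT ltJfT.
  apply: (negP dfS); apply: Mindep_sub igJ; first exact: is_graphU1.
  by rewrite fsetUS.
suff : #|` g |` J| <= #|` J| by rewrite cardfsU1 gNJ add1n ltnn.
apply: Jmax => //.
- exact: fsubset_trans sSJ (fsubsetU1 _ _).
- by rewrite fsubUset fsub1set sJTS in_fsetU gT.
Qed.

Lemma rank_le_spans T G : is_graph G -> is_graph T -> Mindep indep T ->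
  (forall g, g \in G -> spans indep T g) -> rank indep G <= #|` T|.
Proof.
move=> hG hT iT spanG; apply: rank_le => // F sFG iF.
rewrite leqNgt; apply/negP => ltTF.
have [g /fsetDP [gF gNT] igT] := Mindep_aug hT (is_graphS sFG hG) iT iF ltTF.
by case: (spanG g (fsubsetP sFG g gF)) => [|/negP //]; rewrite (negbTE gNT).
Qed.

Lemma Mindep_star_iso u L u' L' : u \notin L -> u' \notin L' -> #|` L| = #|` L'| ->
  Mindep indep (star u L) = Mindep indep (star u' L').
Proof.
move=> uL uL' cardL.
pose f x := if x == u then u' else nth u' (enum_fset L') (index x (enum_fset L)).
have fL x : x \in L -> f x \in L'.
  move=> xL; rewrite /f; case: eqVneq => [xu|_]; first by rewrite -xu xL in uL.
  by apply: mem_nth; rewrite -cardL index_mem.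
have finj : {in L &, injective f}.
  move=> x y xL yL; rewrite /f.
  case: eqVneq => [xu|_]; first by rewrite -xu xL in uL.
  case: eqVneq => [yu|_]; first by rewrite -yu yL in uL.
  move/eqP; rewrite nth_uniq ?fset_uniq // -?cardL ?index_mem // => /eqP exy.
  by rewrite -(nth_index u (s := enum_fset L) xL) exy nth_index.
have fu : f u = u' by rewrite /f eqxx.
have fLL' : f @` L = L'.
  apply/eqP; rewrite eqEfcard card_in_imfset //= cardL leqnn andbT.
  by apply/fsubsetP => _ /imfsetP [x xL ->]; apply: fL.
rewrite -(Mindep_gimage (f := f) (is_graph_star uL)) ?gimage_star ?fu ?fLL' //.
move=> x y /star_vertex [->|xL] /star_vertex [->|yL] //.
- by rewrite fu => u'fy; have := fL y yL; rewrite -u'fy (negbTE uL').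
- by rewrite fu => fxu'; have := fL x xL; rewrite fxu' (negbTE uL').
- exact: finj.
Qed.

Lemma spans_star_edge T u L y : is_graph T -> Mindep indep T ->
  u \notin L -> y \notin L -> u != y ->
  Mindep indep (star u L) -> ~~ Mindep indep (star u (y |` L)) ->
  (forall v, v \in L -> spans indep T [fset u; v]) -> spans indep T [fset u; y].
Proof.
move=> hT iT uL yL uy iS dS spanL.
apply: (spans_trans hT (is_graph_star uL)) => //; first by rewrite cardfs2 uy.
- by move=> g /star_edge [v vL ->]; apply: spanL.
- by rewrite -starU1.
Qed.

(* The edge uy is spanned by a star of j edges at u whose edges are already
   spanned by T, first for u in K_(j+1) and then for all u. *)
Lemma spans_every_edge j T : is_graph T -> Mindep indep T ->
  (forall g, g \in Kn j.+1 -> spans indep T g) ->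
  (forall u L, u \notin L -> #|` L| = j -> Mindep indep (star u L)) ->
  (forall u L, u \notin L -> #|` L| = j.+1 -> ~~ Mindep indep (star u L)) ->
  forall a b, a != b -> spans indep T [fset a; b].
Proof.
move=> hT iT spanK indep_j dep_j1.
have spans_star u L y : u \notin L -> #|` L| = j -> y \notin L -> u != y ->
    (forall v, v \in L -> spans indep T [fset u; v]) -> spans indep T [fset u; y].
  move=> uL cardL yL uy; apply: spans_star_edge => //; first exact: indep_j.
  by rewrite dep_j1 // ?cardfsU1 ?yL ?cardL // in_fset1U negb_or uy.
have spans_low a b : a < j.+1 -> a != b -> spans indep T [fset a; b].
  move=> ha ab; case: (ltnP b j.+1) => hb; first exact/spanK/fset2_in_Kn.
  pose L := [fset y | y in iota 0 j.+1] `\ a.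
  apply: (spans_star a L) => //.
  - by rewrite in_fsetD1 eqxx.
  - by have := card_iota_fset 0 j.+1; rewrite (cardfsD1 a) in_iota_fset ha add1n => -[].
  - by rewrite in_fsetD1 in_iota_fset ltnNge hb andbF.
  by move=> v /fsetD1P [va]; rewrite in_iota_fset => /= hv; apply/spanK/fset2_in_Kn; rewrite // eq_sym.
move=> a b ab; case: (ltnP a j.+1) => ha; first exact: spans_low.
case: (ltnP b j.+1) => hb; first by rewrite fset2C; apply: spans_low; rewrite // eq_sym.
pose L := [fset y | y in iota 0 j].
apply: (spans_star a L) => //; rewrite ?card_iota_fset ?in_iota_fset //; try lia.
move=> v; rewrite in_iota_fset => /andP [_ hv]; rewrite fset2C.
by apply: spans_low; [lia | apply/eqP; lia].
Qed.

End GraphMatroidFamily.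

Definition adj (G : graph) : rel nat := fun u v => [fset u; v] \in G.

Lemma forestS H G : H `<=` G -> forest G -> forest H.
Proof.
move=> /fsubsetP sHG fG [s [s3 us cs]]; apply: fG; exists s; split => //.
by apply: sub_cycle cs => u v /sHG.
Qed.

Lemma path_vertex G x p y : path (adj G) x p -> y \in p -> is_vertex G y.
Proof.
elim: p x => [//|z p IH] x /= /andP [xz pz]; rewrite inE => /orP [/eqP ->|yp].
  by exists [fset x; z]; rewrite ?fset22.
exact: IH pz yp.
Qed.

Lemma chord_cycle G x p0 p w : uniq [:: x, p0 & p] -> path (adj G) x (p0 :: p) ->
  w \in p -> [fset x; w] \in G -> has_cycle G.
Proof.
move=> uxp pxp wp xw; pose i := index w p.
have take_w : take i.+1 p = rcons (take i p) w by rewrite (take_nth w) ?index_mem ?nth_index.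
exists [:: x, p0 & take i.+1 p]; split.
- by rewrite /= take_w size_rcons.
- by rewrite -(cat_take_drop i.+1 p) -cat_cons -cat_cons cat_uniq in uxp; case/and3P: uxp.
rewrite /cycle rcons_path /= take_w last_rcons -take_w [[fset w; x]]fset2C xw andbT.
by rewrite -(cat_take_drop i.+1 p) -cat_cons cat_path in pxp; case/andP: pxp.
Qed.

Lemma ex_longest_path G : is_graph G -> G != fset0 ->
  exists x p0 p, [/\ uniq [:: x, p0 & p], path (adj G) x (p0 :: p) &
    forall y q, uniq (y :: q) -> path (adj G) y q -> size q <= (size p).+1].
Proof.
move=> hG /fset0Pn [e eG]; have [a [b [ab Eab]]] := card2_fset2 (hG _ eG); subst e.
pose P n := exists y q, [/\ uniq (y :: q), path (adj G) y q & size q = n].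
have P1 : P 1 by exists a, [:: b]; rewrite /= inE ab /adj eG.
have boundP n : P n -> n <= (vbound G).+1.
  case=> y [q [/andP [_ uq] pq <-]]; rewrite -[_.+1](size_iota 0).
  apply: uniq_leq_size => // z zq; rewrite mem_iota /= ltnS.
  exact/leq_vbound/(path_vertex pq zq).
have [m [x [[|p0 p] [uxp pxp sp]]] mmax] := ex_maxn_prop P1 boundP.
  by move: (mmax 1 P1); rewrite -sp.
exists x, p0, p; split=> // y q uyq pyq; rewrite -/(size (p0 :: p)) sp.
by apply: mmax; exists y, q.
Qed.

(* The endpoint x of a longest path is a leaf: a second edge xw either closes a
   cycle (w on the path) or extends the path (w off the path). *)
Lemma forest_leaf F : is_graph F -> forest F -> F != fset0 ->
  exists u v, [/\ [fset u; v] \in F, u != v & ~ is_vertex (F `\ [fset u; v]) v].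
Proof.
move=> hF fF F0; have [x [p0 [p [uxp pxp longest]]]] := ex_longest_path hF F0.
exists p0, x; split.
- by rewrite fset2C; case/andP: pxp.
- by apply/eqP => p0x; move: uxp; rewrite /= p0x inE eqxx.
case=> e /fsetD1P [ne eF] xe; have [w xw Ee] := card2_fset2_at (hF _ eF) xe.
have wp0 : w != p0 by apply: contra_neq ne => wp0; rewrite Ee wp0 fset2C.
have xwF : [fset x; w] \in F by rewrite -Ee.
case: (boolP (w \in p)) => wp; first exact: fF (chord_cycle uxp pxp wp xwF).
suff : size [:: x, p0 & p] <= (size p).+1 by rewrite ltnn.
apply: (longest w); last by rewrite /= {1}/adj fset2C xwF.
by rewrite cons_uniq uxp andbT !inE eq_sym (negPf xw) (negPf wp0) (negPf wp).
Qed.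

Section UnboundedFamily.

Variable indep : graph -> graph -> bool.
Hypothesis Hf : graph_matroid_family indep.
Hypothesis unb : unbounded indep.

Lemma Mindep_star u L : u \notin L -> Mindep indep (star u L).
Proof.
move Ej : #|` L| => j; elim: j u L Ej => [|j IH] u L cardL uL.
  by move/cardfs0_eq: cardL => ->; rewrite /star imfset0; apply: Mindep0.
apply/negPn/negP => dep.
have dep_j1 u' L' : u' \notin L' -> #|` L'| = j.+1 -> ~~ Mindep indep (star u' L').
  by move=> u'L' cardL'; rewrite -(Mindep_star_iso Hf uL u'L') ?cardL' //; apply/negP.
have [T [_ sTK iT] Tmax] := ex_max_Mindep (fsub0set (Kn j.+1)) (Mindep0 Hf).
have hT := is_graphS sTK (is_graph_Kn j.+1).
have spanK g : g \in Kn j.+1 -> spans indep T g.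
  by apply: spans_max => // J; apply: Tmax; apply: fsub0set.
have spanT := spans_every_edge Hf hT iT spanK (fun u' L' uL' e => IH u' L' e uL') dep_j1.
have [n ltTn] := unb #|` T|.+1.
suff : rank indep (Kn n) <= #|` T| by rewrite leqNgt ltTn.
apply: (rank_le_spans Hf (is_graph_Kn n) hT iT) => _ /Kn_edge [a [b [_ _ ab ->]]].
exact: spanT.
Qed.

(* A large star at u with leaves beyond all vertices of F0 and of uv supplies
   a new edge uw, and swapping w with v renames it to uv. *)
Lemma Mindep_U1_pendant F0 u v : is_graph F0 -> Mindep indep F0 -> u != v ->
  ~ is_vertex F0 v -> Mindep indep ([fset u; v] |` F0).
Proof.
move=> hF0 iF0 uv vF0; pose M := vbound F0 + u + v.
pose L := [fset y | y in iota M.+1 #|` F0|.+1].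
have uL : u \notin L by rewrite in_iota_fset /M; apply/negP; lia.
apply: (Mindep_U1_relabel Hf hF0 (is_graph_star uL)) => //.
- exact: Mindep_star.
- by rewrite card_star // card_iota_fset.
move=> _ /star_edge [w + ->]; rewrite in_iota_fset /M => /andP [Mw _].
exists (swap w v); first exact: swap_inj.
split; last by rewrite eimage_fset2 swapL swap_id //; apply/eqP; lia.
move=> x xF0; have xM := leq_vbound xF0; rewrite swap_id //; first by apply/eqP; lia.
by apply: contra_not_neq vF0 => <-.
Qed.

Lemma Mindep_forest F : is_graph F -> forest F -> Mindep indep F.
Proof.
elim/finSet_rect: F => F IH hF fF; case: (eqVneq F fset0) => [->|F0].
  exact: Mindep0.
have [u [v [uvF uv vF']]] := forest_leaf hF fF F0.
have sF' := fsubsetDl F [fset [fset u; v]].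
rewrite -(fsetD1K uvF); apply: Mindep_U1_pendant => //; first exact: is_graphS sF' hF.
by apply: IH (fproperD1 uvF) (is_graphS sF' hF) (forestS sF' fF).
Qed.

End UnboundedFamily.

Definition is_matching (G : graph) : Prop :=
  forall e1 e2 x, e1 \in G -> e2 \in G -> x \in e1 -> x \in e2 -> e1 = e2.

Lemma is_matchingS H G : H `<=` G -> is_matching G -> is_matching H.
Proof. by move=> /fsubsetP sHG mG e1 e2 x /sHG e1G /sHG e2G; apply: mG. Qed.

Lemma is_matching_forest G : is_matching G -> forest G.
Proof.
move=> mG [[|a [|b [|c s]]] [//= _ uabcs /and3P [ab bc _]]].
have /fset2P [ca|cb] : c \in [fset a; b] by rewrite (mG _ _ b ab bc) ?fset21 ?fset22.
  by move: uabcs; rewrite ca /= !inE eqxx orTb orbT.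
by move: uabcs; rewrite cb /= !inE eqxx orTb andbF.
Qed.

Lemma matching_edge k e : e \in matching k -> exists2 i, i < k & e = [fset i.*2; i.*2.+1].
Proof. by case/imfsetP => i; rewrite /= in_iota_fset => ik ->; exists i. Qed.

Lemma matching_edge_inj i j x :
  x \in [fset i.*2; i.*2.+1] -> x \in [fset j.*2; j.*2.+1] -> i = j.
Proof. by move=> /fset2P [] -> /fset2P []; lia. Qed.

Lemma is_graph_matching k : is_graph (matching k).
Proof. by move=> _ /matching_edge [i _ ->]; rewrite cardfs2; case: eqP => //; lia. Qed.
Arguments is_graph_matching : clear implicits.

Lemma card_matching k : #|` matching k| = k.
Proof.
rewrite card_in_imfset /= ?card_iota_fset // => i j _ _ eij.
by apply: (@matching_edge_inj i j i.*2); rewrite -?eij fset21.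
Qed.

Lemma is_matching_matching k : is_matching (matching k).
Proof.
move=> _ _ x /matching_edge [i _ ->] /matching_edge [j _ ->] xi xj.
by rewrite (matching_edge_inj xi xj).
Qed.
Arguments is_matching_matching : clear implicits.

Lemma matching_sub_Kn k n : k.*2 <= n -> matching k `<=` Kn n.
Proof. by move=> kn; apply/fsubsetP => _ /matching_edge [i ik ->]; apply: fset2_in_Kn; lia. Qed.

Section RankLimit.

Variable indep : graph -> graph -> bool.
Hypothesis Hf : graph_matroid_family indep.
Variable r : nat.
Hypothesis lim : rank_limit indep r.

(* A basis of a large K_N, shifted beyond the vertices of A, c and d, supplies
   a new edge, which two swaps rename to cd. *)
Lemma Mindep_U1_disjoint A c d : is_graph A -> Mindep indep A -> #|` A| < r ->
  c != d -> ~ is_vertex A c -> ~ is_vertex A d -> Mindep indep ([fset c; d] |` A).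
Proof.
move=> hA iA ltAr cd cA dA; have [N limN] := lim.
have [F [sFK iF] cardF] := rank_basis Hf (is_graph_Kn N); rewrite limN // in cardF.
have hF := is_graphS sFK (is_graph_Kn N).
pose K := (maxn (vbound A) (maxn c d)).+1.
have [cK dK] : c < K /\ d < K by rewrite /K; lia.
have addK_inj : injective (addn K) := @addnI K.
have vinj u v : is_vertex F u -> is_vertex F v -> K + u = K + v -> u = v.
  by move=> _ _ /addK_inj.
apply: (Mindep_U1_relabel Hf hA (is_graph_gimage hF vinj)) => //.
- by rewrite Mindep_gimage.
- by rewrite card_gimage // cardF.
move=> _ /imfsetP [e eF ->]; have [a [b [ab Eab]]] := card2_fset2 (hF _ eF); subst e.
exists (swap (K + a) c \o swap (K + b) d); first exact/inj_comp/swap_inj/swap_inj.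
split=> [x xA|]; last first.
  by rewrite !eimage_fset2 /= (@swap_id (K + b) d (K + a)) ?swapL ?swap_id //;
    apply/eqP; lia.
have xK : x < K by rewrite /K ltnS leq_max leq_vbound.
have xc : x != c by apply: contra_not_neq cA => <-.
have xd : x != d by apply: contra_not_neq dA => <-.
by rewrite /= !swap_id //; apply/eqP; lia.
Qed.

Lemma Mindep_small_matching A : is_graph A -> is_matching A -> #|` A| <= r ->
  Mindep indep A.
Proof.
elim/fset1U_rect: A => [|f A fA IH] hfA mfA; first by move=> _; apply: Mindep0.
rewrite cardfsU1 fA add1n => ltAr; have sA := fsubsetU1 f A.
have ff : f \in f |` A := fset1U1 f A.
have fNA y : y \in f -> ~ is_vertex A y.
  move=> yf [e eA ye]; have fe := mfA f e y ff (fsubsetP sA e eA) yf ye.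
  by rewrite fe eA in fA.
have [c [d [cd Ef]]] := card2_fset2 (hfA f ff).
have hA := is_graphS sA hfA.
rewrite Ef; apply: Mindep_U1_disjoint => //; last by apply: fNA; rewrite Ef fset22.
- exact: IH hA (is_matchingS sA mfA) (ltnW ltAr).
- by apply: fNA; rewrite Ef fset21.
Qed.

End RankLimit.

Theorem lemma2p4 (indep : graph -> graph -> bool) :
  graph_matroid_family indep ->
  (unbounded indep <-> (forall G, is_graph G -> forest G -> M_independent indep G)) /\
  (bounded indep -> forall rM, rank_limit indep rM ->
     M_circuit indep (matching rM.+1)).
Proof.
move=> Hf; split; first split.
- move=> unb G hG fG; rewrite /M_independent rank_Mindep //.
  exact: Mindep_forest.
- move=> forest_indep k; exists k.*2.
  have := forest_indep _ (is_graph_matching k) (is_matching_forest (is_matching_matching k)).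
  rewrite /M_independent card_matching => rank_k; rewrite -{1}rank_k.
  by apply: (rank_mono Hf (is_graph_Kn k.*2)); apply: matching_sub_Kn.
(* [bounded indep] is implied by [rank_limit indep rM]. *)
- move=> _ r lim; have [N limN] := lim; split.
    rewrite card_matching ltnS -[leqRHS](limN (N + r.+1.*2)) ?leq_addr //.
    by apply: (rank_mono Hf (is_graph_Kn (N + r.+1.*2))); apply: matching_sub_Kn; apply: leq_addl.
  move=> e eM; have sM := fsubsetDl (matching r.+1) [fset e].
  have cardM : #|` matching r.+1 `\ e| = r.
    by have := card_matching r.+1; rewrite (cardfsD1 e) eM add1n => -[].
  have hM := is_graphS sM (is_graph_matching r.+1).
  rewrite card_matching subn1 rank_Mindep //.
  by apply: (Mindep_small_matching Hf lim hM (is_matchingS sM (is_matching_matching _))); rewrite cardM.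
Qed.
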